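(* Let $P=P_1\cup P_2$ be a finite set of points in the plane with $P$ generic, such that $P_1$ is contained in a disk of radius $1$ centered at a point $o$, and every point $a\in P_2$ satisfies $|oa|>3$ and lies in a fixed wedge with apex $o$ and angle $3.6^\circ$. Then $T_P$ contains exactly one edge connecting a point of $P_1$ to a point of $P_2$ (i.e., only one such edge).
   Context: A finite planar point set is generic if no three of its points are collinear and every subset has a unique Euclidean minimum spanning tree (MST); $T_P$ denotes the MST of $P$. $|uv|$ is the Euclidean distance. *)

From mathcomp Require Import all_boot all_order all_algebra.
From mathcomp Require Import reals trigo.
Set Implicit Arguments. Unset Strict Implicit. Unset Printing Implicit Defensive.
Import Order.TTheory GRing.Theory Num.Theory.
Local Open Scope ring_scope.

Definition point (R : realType) := (R * R)%type.

Definition dist (R : realType) (a b : point R) : R :=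
  Num.sqrt ((a.1 - b.1) ^+ 2 + (a.2 - b.2) ^+ 2).

Definition collinear (R : realType) (a b c : point R) : Prop :=
  (b.1 - a.1) * (c.2 - a.2) - (b.2 - a.2) * (c.1 - a.1) = 0.

(* A finite point set P is given as an injective enumeration p : 'I_n -> point R;
   subsets of P are subsets S : {set 'I_n}; an (undirected) edge is a 2-element
   set of indices, a graph is a set of edges. *)

Definition edges_within n (S : {set 'I_n}) (E : {set {set 'I_n}}) : Prop :=
  forall e, e \in E -> e \subset S /\ #|e| = 2.

Definition adj n (E : {set {set 'I_n}}) : rel 'I_n :=
  fun i j => [set i; j] \in E.

Definition connected_on n (S : {set 'I_n}) (E : {set {set 'I_n}}) : Prop :=
  forall i j, i \in S -> j \in S -> connect (adj E) i j.

Definition acyclic n (E : {set {set 'I_n}}) : Prop :=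
  forall i j, [set i; j] \in E -> ~~ connect (adj (E :\ [set i; j])) i j.

Definition spanning_tree n (S : {set 'I_n}) (E : {set {set 'I_n}}) : Prop :=
  [/\ edges_within S E, connected_on S E & acyclic E].

(* Length of an edge e = {i, j}: (d(i,i)+d(i,j)+d(j,i)+d(j,j))/2 = |p_i p_j|. *)
Definition edge_len (R : realType) n (p : 'I_n -> point R) (e : {set 'I_n}) : R :=
  (\sum_(i in e) \sum_(j in e) dist (p i) (p j)) / 2.

Definition weight (R : realType) n (p : 'I_n -> point R) (E : {set {set 'I_n}}) : R :=
  \sum_(e in E) edge_len p e.

Definition is_MST (R : realType) n (p : 'I_n -> point R) (S : {set 'I_n})
  (E : {set {set 'I_n}}) : Prop :=
  spanning_tree S E /\
  forall E', spanning_tree S E' -> weight p E <= weight p E'.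

Definition unique_MST (R : realType) n (p : 'I_n -> point R) (S : {set 'I_n}) : Prop :=
  exists E, is_MST p S E /\ forall E', is_MST p S E' -> E' = E.

Definition generic (R : realType) n (p : 'I_n -> point R) : Prop :=
  [/\ injective p,
      (forall i j k : 'I_n, i != j -> j != k -> i != k ->
         ~ collinear (p i) (p j) (p k))
    & forall S : {set 'I_n}, unique_MST p S].

Definition in_wedge (R : realType) (o : point R) (theta0 alpha : R) (a : point R) : Prop :=
  exists r phi : R, [/\ 0 <= r, theta0 <= phi <= theta0 + alpha &
    a = (o.1 + r * cos phi, o.2 + r * sin phi)].

Definition crossing n (A B : {set 'I_n}) (e : {set 'I_n}) : bool :=
  [exists i in A, exists j in B, e == [set i; j]].

From mathcomp Require Import all_boot all_order all_algebra.
From mathcomp Require Import reals trigo.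
From mathcomp Require Import ring lra.
Import Order.TTheory GRing.Theory Num.Theory.
Local Open Scope ring_scope.

(* Points of P1 are at distance at most 2 from each other, while every
   P1-P2 edge is longer than 2.  By the cut property, deleting a crossing
   edge ab from the MST therefore leaves all of P1 on the side of a.  If a'b'
   were a second crossing edge, b' would lie on that side too, and exchanging
   ab for bb' gives |ab| <= |bb'|; symmetrically |a'b'| <= |bb'|.  But for
   b, b' in a wedge of angle at most pi/8 beyond radius 3 with |ob| <= |ob'|,
   the law of cosines gives |bb'| < |ob'| - 1 <= |a'b'|. *)

Section EuclideanPlane.
Context {R : realType}.
Implicit Types (x y z o : point R) (r s phi psi : R).

Lemma distC x y : dist x y = dist y x.
Proof. by rewrite /dist (sqrrB x.1) (sqrrB y.1) (sqrrB x.2) (sqrrB y.2); congr Num.sqrt; lra. Qed.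

Lemma dist_xx x : dist x x = 0.
Proof. by rewrite /dist !subrr expr0n /= addr0 sqrtr0. Qed.

Lemma cauchy_schwarz2 (a1 a2 b1 b2 : R) :
  a1 * b1 + a2 * b2 <= Num.sqrt (a1 ^+ 2 + a2 ^+ 2) * Num.sqrt (b1 ^+ 2 + b2 ^+ 2).
Proof.
rewrite -sqrtrM ?addr_ge0 ?sqr_ge0 //; apply: le_trans (ler_norm _) _.
rewrite -sqrtr_sqr ler_sqrt ?mulr_ge0 ?addr_ge0 ?sqr_ge0 // -subr_ge0.
have -> : (a1 ^+ 2 + a2 ^+ 2) * (b1 ^+ 2 + b2 ^+ 2) - (a1 * b1 + a2 * b2) ^+ 2
          = (a1 * b2 - a2 * b1) ^+ 2 by ring.
exact: sqr_ge0.
Qed.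

Lemma sqrt_sumsqr_triangle (a1 a2 b1 b2 : R) :
  Num.sqrt ((a1 + b1) ^+ 2 + (a2 + b2) ^+ 2) <=
  Num.sqrt (a1 ^+ 2 + a2 ^+ 2) + Num.sqrt (b1 ^+ 2 + b2 ^+ 2).
Proof.
rewrite -(ger0_norm (addr_ge0 (sqrtr_ge0 _) (sqrtr_ge0 _))) -sqrtr_sqr.
rewrite ler_sqrt ?sqr_ge0 // !sqrrD !sqr_sqrtr ?addr_ge0 ?sqr_ge0 //.
have := cauchy_schwarz2 a1 a2 b1 b2; lra.
Qed.

Lemma dist_triangle x y z : dist x z <= dist x y + dist y z.
Proof.
have -> : dist x z = Num.sqrt (((x.1 - y.1) + (y.1 - z.1)) ^+ 2 + ((x.2 - y.2) + (y.2 - z.2)) ^+ 2).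
  by rewrite /dist !subrKA.
exact: sqrt_sumsqr_triangle.
Qed.

Lemma edge_len_set2 n (p : 'I_n -> point R) i j :
  i != j -> edge_len p [set i; j] = dist (p i) (p j).
Proof.
move=> ij; have ij' : i \notin [set j] by rewrite inE.
rewrite /edge_len big_setU1 // big_set1 !big_setU1 // !big_set1 !dist_xx.
rewrite (distC (p j)) /=; lra.
Qed.

Definition polar o r phi : point R := (o.1 + r * cos phi, o.2 + r * sin phi).

Lemma dist_center_polar o r phi : 0 <= r -> dist o (polar o r phi) = r.
Proof.
move=> r_ge0; rewrite /dist /=.
have -> : (o.1 - (o.1 + r * cos phi)) ^+ 2 + (o.2 - (o.2 + r * sin phi)) ^+ 2
          = r ^+ 2 * (cos phi ^+ 2 + sin phi ^+ 2) by ring.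
by rewrite cos2Dsin2 mulr1 sqrtr_sqr ger0_norm.
Qed.

Lemma dist_polar o r s phi psi :
  dist (polar o r phi) (polar o s psi) =
  Num.sqrt (r ^+ 2 + s ^+ 2 - 2 * r * s * cos (phi - psi)).
Proof.
rewrite /dist /= cosB; congr Num.sqrt.
have := cos2Dsin2 phi; have := cos2Dsin2 psi.
move=> /(congr1 (fun t => s ^+ 2 * t)) hs /(congr1 (fun t => r ^+ 2 * t)) hr.
rewrite !mulr1 in hr hs; rewrite -[in RHS]hr -[in RHS]hs; ring.
Qed.

Lemma cos_pi8_ge : 9 / 10 <= cos (pi / 8 : R).
Proof.
have pi_gt0 : (0 : R) < pi := pi_gt0 R.
have cos_half (t : R) : cos (t *+ 2) = cos t ^+ 2 * 2 - 1 by rewrite cos_mulr2n mulr_natr.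
have c8_gt0 : 0 < cos (pi / 8 : R) by apply: cos_gt0_pihalf; apply/andP; split; lra.
have c4 : cos (pi / 4 : R) ^+ 2 * 2 - 1 = 0.
  by rewrite -cos_half -cos_pihalf mulr2n; congr cos; lra.
have c8 : cos (pi / 8 : R) ^+ 2 * 2 - 1 = cos (pi / 4).
  by rewrite -cos_half mulr2n; congr cos; lra.
have c4_gt0 : 0 < cos (pi / 4 : R) by apply: cos_gt0_pihalf; apply/andP; split; lra.
have c4_ge : 7 / 10 <= cos (pi / 4 : R) by nra.
nra.
Qed.

Lemma cos_ge_9_10 (d : R) : `|d| <= pi / 8 -> 9 / 10 <= cos d.
Proof.
move=> d_le; have pi_gt0 : (0 : R) < pi := pi_gt0 R; have d_ge0 := normr_ge0 d.
rewrite -cos_norm; apply: le_trans cos_pi8_ge _.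
move: d_le; rewrite le_eqVlt => /orP[/eqP -> // | d_lt].
by apply/ltW; rewrite ltr_cos //; rewrite in_itv /=; apply/andP; split; lra.
Qed.

Lemma far_cosine_law_lt r s c : 3 < r -> r <= s -> 9 / 10 <= c ->
  r ^+ 2 + s ^+ 2 - 2 * r * s * c < (s - 1) ^+ 2.
Proof.
(* For c = 9/10 the gap is 2 (s - r) (9r/10 - 1) + r (8r/10 - 2) + 1 > 0. *)
move=> r_gt3 r_le_s c_ge.
have rs_c : 9 / 10 * (r * s) <= r * s * c by rewrite [_ * c]mulrC ler_wpM2r //; nra.
have : 0 <= (s - r) * (9 / 10 * r - 1) by apply: mulr_ge0; lra.
have : 0 < r * (8 / 10 * r - 2) by apply: mulr_gt0; lra.
nra.
Qed.

Lemma in_wedge_dist_lt {o theta0 alpha b b'} : alpha <= pi / 8 ->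
  in_wedge o theta0 alpha b -> in_wedge o theta0 alpha b' ->
  3 < dist o b -> dist o b <= dist o b' -> dist b b' < dist o b' - 1.
Proof.
move=> alpha_le [r [phi [r_ge0 /andP[phi_ge phi_le] ->]]].
move=> [s [psi [s_ge0 /andP[psi_ge psi_le] ->]]].
rewrite !dist_center_polar // dist_polar => r_gt3 r_le_s.
have s1_gt0 : 0 < s - 1 by lra.
rewrite -(gtr0_norm s1_gt0) -sqrtr_sqr ltr_sqrt ?exprn_gt0 //.
apply: far_cosine_law_lt => //; apply: cos_ge_9_10.
by rewrite ler_norml; apply/andP; split; lra.
Qed.

End EuclideanPlane.

Section Forests.
Context {n : nat}.
Implicit Types (E F T : {set {set 'I_n}}) (S A : {set 'I_n}) (a b u v i j : 'I_n).

Lemma adj_sym E : symmetric (adj E).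
Proof. by move=> i j; rewrite /adj setUC. Qed.

Lemma connect_adj_sym E : connect_sym (adj E).
Proof. exact/sym_connect_sym/adj_sym. Qed.

Lemma connect_adj_sub {E F} : E \subset F -> subrel (connect (adj E)) (connect (adj F)).
Proof.
by move=> sEF; apply: connect_sub => i j ij; apply: connect1; rewrite /adj (subsetP sEF).
Qed.

Local Notation connect_off E a b := (connect (adj (E :\ [set a; b]))).

Lemma connect_setD1_edge {E} a b {i j} : connect (adj E) i j ->
  [\/ connect_off E a b i j,
       connect_off E a b i a /\ connect_off E a b b j
     | connect_off E a b i b /\ connect_off E a b a j].
Proof.
have C_trans := @connect_trans _ (adj (E :\ [set a; b])).
case/connectP => s; elim: s i => [|k s IH] i /= => [_ -> | /andP[ik ks] j_last].
  by constructor 1; apply: connect0.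
have [Cik | nCik] := boolP (connect_off E a b i k).
  case: (IH k ks j_last) => [Ckj | [Cka Cbj] | [Ckb Caj]].
  - by constructor 1; apply: C_trans Ckj.
  - by constructor 2; split=> //; apply: C_trans Cka.
  - by constructor 3; split=> //; apply: C_trans Ckb.
have ik_ab : [set i; k] = [set a; b].
  apply/eqP; apply: contraNT nCik => ik_ab; apply: connect1.
  by rewrite /adj !inE ik_ab.
have i_ab : i \in [set a; b] by rewrite -ik_ab set21.
have k_ab : k \in [set a; b] by rewrite -ik_ab set22.
move: nCik (IH k ks j_last); case/set2P: i_ab => ->; case/set2P: k_ab => ->;
  rewrite ?connect0 //= => _.
- by case=> [Cbj | [_ Cbj] | [_ Caj]]; [constructor 2 | constructor 2 | constructor 1].
- by case=> [Caj | [_ Cbj] | [_ Caj]]; [constructor 3 | constructor 1 | constructor 3].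
Qed.

Lemma connect_cross_edge {E A i j} : connect (adj E) i j -> i \in A -> j \notin A ->
  exists i' j', [/\ i' \in A, j' \notin A & [set i'; j'] \in E].
Proof.
case/connectP => s; elim: s i => [|k s IH] i /= => [_ -> -> // | /andP[ik ks] j_last iA jA].
have [kA | kA] := boolP (k \in A); first exact: IH kA jA.
by exists i, k.
Qed.

Lemma acyclic_sub E F : F \subset E -> acyclic E -> acyclic F.
Proof.
move=> sFE acE i j ijF; apply: contra (acE i j (subsetP sFE _ ijF)).
by apply: connect_adj_sub; apply: setSD.
Qed.

Lemma acyclic_setU1_edge E u v :
  acyclic E -> ~~ connect (adj E) u v -> acyclic ([set u; v] |: E).
Proof.
move=> acE nuv i j; have uv_sym := connect_adj_sym E.
have [ij_uv _ | ij_uv] := eqVneq [set i; j] [set u; v].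
  have sub : ([set u; v] |: E) :\ [set i; j] \subset E.
    by apply/subsetP => e; rewrite !inE ij_uv => /andP[/negbTE-> /=].
  apply: contra nuv => /(connect_adj_sub sub) Cij.
  have u_ij : u \in [set i; j] by rewrite ij_uv set21.
  have v_ij : v \in [set i; j] by rewrite ij_uv set22.
  by case/set2P: u_ij => ->; case/set2P: v_ij => ->; rewrite ?connect0 // uv_sym.
rewrite in_setU1 (negbTE ij_uv) /= => ijE; apply/negP => Cij.
have sub : (([set u; v] |: E) :\ [set i; j]) :\ [set u; v] \subset E :\ [set i; j].
  by apply/subsetP => e; rewrite !inE => /and3P[/negbTE-> -> /=].
have lift := connect_adj_sub (subset_trans sub (subD1set E [set i; j])).
have ij1 : connect (adj E) i j by apply: connect1.
case: (connect_setD1_edge u v Cij) => [/(connect_adj_sub sub) | [iu vj] | [iv uj]].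
- by apply/negP; apply: acE.
- move/negP: nuv; apply; rewrite uv_sym; rewrite uv_sym in ij1.
  exact: connect_trans (lift _ _ vj) (connect_trans ij1 (lift _ _ iu)).
- move/negP: nuv; apply; rewrite uv_sym in ij1.
  exact: connect_trans (lift _ _ uj) (connect_trans ij1 (lift _ _ iv)).
Qed.

Lemma connected_on_exchange S T a b u v : connected_on S T ->
  connect_off T a b a u -> connect_off T a b b v ->
  connected_on S ([set u; v] |: (T :\ [set a; b])).
Proof.
move=> conT au bv i j iS jS.
have lift := connect_adj_sub (subsetUr [set [set u; v]] (T :\ [set a; b])).
have uv : connect (adj ([set u; v] |: (T :\ [set a; b]))) u v.
  by apply: connect1; rewrite /adj setU11.
have ab : connect (adj ([set u; v] |: (T :\ [set a; b]))) a b.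
  rewrite connect_adj_sym in bv.
  exact: connect_trans (lift _ _ au) (connect_trans uv (lift _ _ bv)).
case: (connect_setD1_edge a b (conT i j iS jS)) => [ij | [ia bj] | [ib aj]].
- exact: lift.
- exact: connect_trans (lift _ _ ia) (connect_trans ab (lift _ _ bj)).
- rewrite connect_adj_sym in ab.
  exact: connect_trans (lift _ _ ib) (connect_trans ab (lift _ _ aj)).
Qed.

Lemma spanning_tree_exchange {S T a b u v} :
  spanning_tree S T -> [set a; b] \in T -> u \in S -> v \in S ->
  connect_off T a b a u -> ~~ connect_off T a b a v ->
  spanning_tree S ([set u; v] |: (T :\ [set a; b])).
Proof.
case=> wT conT acT abT uS vS au nav.
have aS : a \in S by apply: (subsetP (wT _ abT).1); rewrite set21.
have bv : connect_off T a b b v.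
  by case: (connect_setD1_edge a b (conT a v aS vS)) => [av | [_ bv] | [_ av]];
    rewrite ?av in nav.
have nuv : ~~ connect_off T a b u v.
  by apply: contra nav; apply: connect_trans au.
have u_neq_v : u != v by apply: contraNneq nuv => ->; apply: connect0.
split.
- move=> e; rewrite in_setU1 => /orP[/eqP-> | /setD1P[_ eT]]; last exact: wT.
  split; last by rewrite cards2 u_neq_v.
  by apply/subsetP => x /set2P[]->.
- exact: connected_on_exchange.
- by apply: acyclic_setU1_edge nuv; apply: acyclic_sub acT; apply: subD1set.
Qed.

End Forests.

Section MinimumSpanningTrees.
Context {R : realType} {n : nat} {p : 'I_n -> point R}.
Implicit Types (T : {set {set 'I_n}}) (S : {set 'I_n}) (a b c u v : 'I_n).

Lemma weight_exchange T e f : e \in T -> f \notin T :\ e ->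
  weight p (f |: (T :\ e)) = weight p T - edge_len p e + edge_len p f.
Proof. by move=> eT fT; rewrite /weight big_setU1 //= [in RHS](big_setD1 _ eT) /=; lra. Qed.

Lemma mst_cut {S T a b u v} : is_MST p S T -> [set a; b] \in T -> u \in S -> v \in S ->
  connect (adj (T :\ [set a; b])) a u -> ~~ connect (adj (T :\ [set a; b])) a v ->
  dist (p a) (p b) <= dist (p u) (p v).
Proof.
case=> stT minT abT uS vS au nav; have [wT _ _] := stT.
have a_neq_b : a != b by have := (wT _ abT).2; rewrite cards2; case: (a != b).
have u_neq_v : u != v by apply: contraNneq nav => <-.
have uv_new : [set u; v] \notin T :\ [set a; b].
  by apply: contra nav => uvT; apply: connect_trans au (connect1 _).
have := minT _ (spanning_tree_exchange stT abT uS vS au nav).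
by rewrite weight_exchange // !edge_len_set2 //; lra.
Qed.

Lemma mst_connect_closer S T a b c : is_MST p S T -> [set a; b] \in T -> c \in S ->
  dist (p a) (p c) < dist (p a) (p b) -> connect (adj (T :\ [set a; b])) a c.
Proof.
move=> mstT abT cS; apply: contraTT => nac; rewrite -leNgt.
have [[wT _ _] _] := mstT.
have aS : a \in S by apply: (subsetP (wT _ abT).1); rewrite set21.
exact: mst_cut mstT abT aS cS (connect0 _ _) nac.
Qed.

End MinimumSpanningTrees.

Section TwoClusters.
Context {R : realType} {n : nat} {p : 'I_n -> point R} {P1 P2 : {set 'I_n}}.
Context {o : point R} {theta0 alpha : R} {T : {set {set 'I_n}}}.
Hypothesis P1UP2 : P1 :|: P2 = [set: 'I_n].
Hypothesis P1_near : forall i, i \in P1 -> dist o (p i) <= 1.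
Hypothesis P2_far : forall a, a \in P2 -> 3 < dist o (p a).
Hypothesis alpha_small : alpha <= pi / 8.
Hypothesis P2_wedge : forall a, a \in P2 -> in_wedge o theta0 alpha (p a).
Hypothesis T_mst : is_MST p [set: 'I_n] T.

Lemma dist_P1 {i j} : i \in P1 -> j \in P1 -> dist (p i) (p j) <= 2.
Proof.
move=> /P1_near i_near /P1_near j_near.
by have := dist_triangle (p i) o (p j); rewrite (distC (p i) o); lra.
Qed.

Lemma dist_P1P2 {i a} : i \in P1 -> a \in P2 -> 2 < dist (p i) (p a).
Proof.
move=> /P1_near i_near /P2_far a_far.
by have := dist_triangle o (p i) (p a); lra.
Qed.

Lemma crossing_edge_far_end {a b a' b'} : a \in P1 -> b \in P2 -> a' \in P1 ->
  [set a; b] \in T -> [set a'; b'] \in T -> [set a; b] != [set a'; b'] ->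
  connect (adj (T :\ [set a; b])) a b'.
Proof.
move=> aP1 bP2 a'P1 abT a'b'T ab_neq.
have aa' : connect (adj (T :\ [set a; b])) a a'.
  apply: mst_connect_closer T_mst abT (in_setT a') _.
  by have := dist_P1 aP1 a'P1; have := dist_P1P2 aP1 bP2; lra.
by apply: connect_trans aa' (connect1 _); rewrite /adj !inE a'b'T eq_sym ab_neq.
Qed.

Lemma crossing_edge_le {a b a' b'} : a \in P1 -> b \in P2 -> a' \in P1 ->
  [set a; b] \in T -> [set a'; b'] \in T -> [set a; b] != [set a'; b'] ->
  dist (p a) (p b) <= dist (p b') (p b).
Proof.
move=> aP1 bP2 a'P1 abT a'b'T ab_neq; have [[_ _ acT] _] := T_mst.
have ab'_off := crossing_edge_far_end aP1 bP2 a'P1 abT a'b'T ab_neq.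
exact: mst_cut T_mst abT (in_setT _) (in_setT _) ab'_off (acT a b abT).
Qed.

Lemma crossing_edges_eq {a b a' b'} : a \in P1 -> b \in P2 -> a' \in P1 -> b' \in P2 ->
  [set a; b] \in T -> [set a'; b'] \in T -> [set a; b] = [set a'; b'].
Proof.
wlog b_closer : a b a' b' / dist o (p b) <= dist o (p b').
  move=> wlog_b aP1 bP2 a'P1 b'P2 abT a'b'T.
  have [b_le | b'_lt] := lerP (dist o (p b)) (dist o (p b')); first exact: wlog_b.
  by apply/esym/wlog_b => //; apply: ltW.
move=> aP1 bP2 a'P1 b'P2 abT a'b'T; apply/eqP/contraT => ab_neq.
have ba_neq : [set a'; b'] != [set a; b] by rewrite eq_sym.
have := crossing_edge_le a'P1 b'P2 aP1 a'b'T abT ba_neq.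
have := in_wedge_dist_lt alpha_small (P2_wedge _ bP2) (P2_wedge _ b'P2) (P2_far _ bP2) b_closer.
have := dist_triangle o (p a') (p b'); have := P1_near _ a'P1.
by rewrite (distC (p b)); lra.
Qed.

Lemma card_crossing_le1 : (#|[set e in T | crossing P1 P2 e]| <= 1)%N.
Proof.
apply/card_le1_eqP => e e'; rewrite !inE.
move=> /andP[eT /existsP[a /andP[aP1 /existsP[b /andP[bP2 /eqP e_ab]]]]].
move=> /andP[e'T /existsP[a' /andP[a'P1 /existsP[b' /andP[b'P2 /eqP e'_ab]]]]].
by rewrite e_ab e'_ab in eT e'T *; apply: crossing_edges_eq.
Qed.

Lemma card_crossing_gt0 : P1 != set0 -> P2 != set0 ->
  (0 < #|[set e in T | crossing P1 P2 e]|)%N.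
Proof.
move=> /set0Pn[i iP1] /set0Pn[j jP2]; have [[_ conT _] _] := T_mst.
have jP1 : j \notin P1.
  by apply/negP => /P1_near j_near; have := P2_far _ jP2; lra.
have [a [b [aP1 bP1 abT]]] := connect_cross_edge (conT i j (in_setT i) (in_setT j)) iP1 jP1.
have bP2 : b \in P2 by have := in_setT b; rewrite -P1UP2 inE (negbTE bP1).
rewrite card_gt0; apply/set0Pn; exists [set a; b].
rewrite inE abT; apply/existsP; exists a; rewrite aP1; apply/existsP; exists b.
by rewrite bP2 eqxx.
Qed.

End TwoClusters.

Theorem lemma3 (R : realType) (n : nat) (p : 'I_n -> point R)
  (P1 P2 : {set 'I_n}) (o : point R) :
  generic p ->
  P1 :|: P2 = [set: 'I_n] ->
  P1 != set0 -> P2 != set0 ->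
  (forall i, i \in P1 -> dist o (p i) <= 1) ->
  (forall a, a \in P2 -> 3 < dist o (p a)) ->
  (exists theta0 : R, forall a, a \in P2 -> in_wedge o theta0 (pi / 50) (p a)) ->
  forall T : {set {set 'I_n}}, is_MST p [set: 'I_n] T ->
    #|[set e in T | crossing P1 P2 e]| = 1%N.
Proof.
move=> _ P1UP2 P1_ne0 P2_ne0 P1_near P2_far [theta0 P2_wedge] T T_mst.
have alpha_small : pi / 50 <= pi / 8 :> R by have := pi_gt0 R; lra.
apply/eqP; rewrite eqn_leq (card_crossing_le1 P1_near P2_far alpha_small P2_wedge T_mst).
exact: card_crossing_gt0 P1UP2 P1_near P2_far T_mst P1_ne0 P2_ne0.
Qed.
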